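(* Let $H=\{a_1,\dots,a_7\}$, let $\mathcal R$ be the equivalence relation on $H$ with classes $\{a_1,a_2,a_3\}$ and $\{a_4,a_5,a_6,a_7\}$, let $\mathcal Q$ be the equivalence relation with classes $\{a_1,a_2,a_4,a_5\}$ and $\{a_3,a_6,a_7\}$, and let $\mathcal H=(H;\mathcal R,\mathcal Q,C_{a_1},\dots,C_{a_7})$ with $C_{a}=\{a\}$. Then $\mathcal H$ is $2$-rigid and strongly $2$-rectangular, but not congruence $2$-permutable; in particular $(a_1,a_6)\in\mathcal R\circ_2\mathcal Q$ while $(a_1,a_6)\notin\mathcal Q\circ_2\mathcal R$.
   Context: $\langle\mathcal H\rangle_2$: relations defined by $\exists^{\equiv2}\mathbf y_1\cdots\exists^{\equiv2}\mathbf y_s\,\Phi$ with $\Phi$ a conjunction of atomic formulas over relations of $\mathcal H$ and equality, where $\exists^{\equiv2}\mathbf y\,\Psi(\mathbf x,\mathbf y)$ holds at $\mathbf a$ iff the number of $\mathbf b$ with $\Psi(\mathbf a,\mathbf b)$ is odd. Strongly $2$-rectangular: every relation of arity $\ge2$ in $\langle\mathcal H\rangle_2$ is rectangular (for every split of coordinates into two nonempty parts, $(\mathbf a,\mathbf c),(\mathbf a,\mathbf d),(\mathbf b,\mathbf c)\in\mathcal S$ implies $(\mathbf b,\mathbf d)\in\mathcal S$). For binary relations, $(\mathbf a,\mathbf b)\in\alpha\circ_2\beta$ iff the number of $\mathbf c$ with $(\mathbf a,\mathbf c)\in\alpha,(\mathbf c,\mathbf b)\in\beta$ is odd. A $2$-congruence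 of $\mathcal S\in\langle\mathcal H\rangle_2$ is an equivalence relation on $\mathcal S$ belonging to $\langle\mathcal H\rangle_2$; $\mathcal H$ is congruence $2$-permutable if $\alpha\circ_2\beta=\beta\circ_2\alpha$ for all $2$-congruences $\alpha,\beta$ of every $\mathcal S\in\langle\mathcal H\rangle_2$. $2$-rigid: no automorphism of order 2. *)

From mathcomp Require Import all_boot fingroup perm.
Set Implicit Arguments. Unset Strict Implicit. Unset Printing Implicit Defensive.

Definition tup (T : finType) (n : nat) := {ffun 'I_n -> T}.
Definition relT (T : finType) := {k : nat & {set tup T k}}.
Definition relS (T : finType) (k : nat) : Type := {set tup T k}.

Definition rstruct (T : finType) := seq (relT T).

Definition nthrel (T : finType) (H : rstruct T) (r : nat) : relT T :=
  nth (Tagged (relS T) (set0 : {set tup T 0})) H r.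

(* atoms: R_r(x_{i1},...,x_{ik}) for the r-th relation of H, or x_i = x_j;
   variables are natural numbers *)
Inductive atom := ARel of nat & seq nat | AEq of nat & nat.

Definition atom_sat (T : finType) (H : rstruct T) (env : nat -> T) (a : atom)
  : bool :=
  match a with
  | ARel r args =>
      (size args == tag (nthrel H r)) &&
      ([ffun i : 'I_(tag (nthrel H r)) => env (nth 0 args i)]
         \in tagged (nthrel H r))
  | AEq i j => env i == env j
  end.

Definition upd (T : finType) (env : nat -> T) (off k : nat) (b : tup T k)
  : nat -> T :=
  fun i => if off <= i then
             (if insub (i - off) is Some j then b j else env i)
           else env i.

(* exists^{=2} y_1 ... exists^{=2} y_s  Phi  where the block y_j has size
   the j-th element of bs and occupies the next variables starting at off *)
Fixpoint sat_q (T : finType) (H : rstruct T) (bs : seq nat) (off : nat)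
  (env : nat -> T) (Phi : seq atom) : bool :=
  match bs with
  | [::] => all (atom_sat H env) Phi
  | k :: bs' =>
      odd #|[pred b : tup T k | sat_q H bs' (off + k) (upd env off b) Phi]|
  end.

Definition atom_wf (T : finType) (H : rstruct T) (N : nat) (a : atom) : bool :=
  match a with
  | ARel r args => (r < size H) && (size args == tag (nthrel H r))
                   && all (fun i => i < N) args
  | AEq i j => (i < N) && (j < N)
  end.

(* S belongs to <H>_2 : defined by a parity-quantified primitive positive
   formula with free variables 0..n-1 *)
Definition definable2 (T : finType) (H : rstruct T) (n : nat)
  (S : {set tup T n}) : Prop :=
  exists (bs : seq nat) (Phi : seq atom),
    all (atom_wf H (n + sumn bs)) Phi /\
    forall (env : nat -> T) (a : tup T n),
      (a \in S) = sat_q H bs n (upd env 0 a) Phi.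

Definition rectangular (T : finType) (n : nat) (S : {set tup T n}) : Prop :=
  forall I : {set 'I_n}, I != set0 -> ~: I != set0 ->
  forall x y z : tup T n, x \in S -> y \in S -> z \in S ->
    (forall i, i \in I -> x i = y i) ->
    (forall i, i \notin I -> x i = z i) ->
    [ffun i => if i \in I then z i else y i] \in S.

Definition strongly_rect2 (T : finType) (H : rstruct T) : Prop :=
  forall (n : nat) (S : {set tup T n}), 2 <= n -> definable2 H S ->
    rectangular S.

Definition pairT (T : finType) (n : nat) (a b : tup T n) : tup T (n + n) :=
  [ffun i => match split i with inl j => a j | inr j => b j end].

Definition comp2 (T : finType) (n : nat) (al be : {set tup T (n + n)})
  (a b : tup T n) : bool :=
  odd #|[pred c : tup T n | (pairT a c \in al) && (pairT c b \in be)]|.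

Definition cong2 (T : finType) (H : rstruct T) (n : nat) (S : {set tup T n})
  (al : {set tup T (n + n)}) : Prop :=
  [/\ definable2 H al,
      (forall a b, pairT a b \in al -> a \in S /\ b \in S),
      (forall a, a \in S -> pairT a a \in al),
      (forall a b, pairT a b \in al -> pairT b a \in al) &
      (forall a b c, pairT a b \in al -> pairT b c \in al -> pairT a c \in al)].

Definition cong_permutable2 (T : finType) (H : rstruct T) : Prop :=
  forall (n : nat) (S : {set tup T n}) (al be : {set tup T (n + n)}),
    definable2 H S -> cong2 H S al -> cong2 H S be ->
    forall a b, comp2 al be a b = comp2 be al a b.

Definition is_aut (T : finType) (H : rstruct T) (s : {perm T}) : Prop :=
  forall r, r < size H ->
  forall t : tup T (tag (nthrel H r)),
    (t \in tagged (nthrel H r)) = ([ffun i => s (t i)] \in tagged (nthrel H r)).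

Definition rigid2 (T : finType) (H : rstruct T) : Prop :=
  ~ exists s : {perm T}, is_aut H s /\ #[s]%g = 2.

Definition el (k : nat) : 'I_7 := inord k.  (* a_{k+1} = el k *)

Definition relR : {set tup 'I_7 2} :=
  [set t : tup _ _ | (val (t ord0) < 3) == (val (t ord_max) < 3)].
Definition inQ1 (x : 'I_7) : bool := val x \in [:: 0; 1; 3; 4].
Definition relQ : {set tup 'I_7 2} :=
  [set t : tup _ _ | inQ1 (t ord0) == inQ1 (t ord_max)].
Definition relC (a : 'I_7) : {set tup 'I_7 1} := [set t : tup _ _ | t ord0 == a].

Definition Hs : rstruct 'I_7 :=
  Tagged (relS 'I_7) relR :: Tagged (relS 'I_7) relQ ::
  [seq Tagged (relS 'I_7) (relC a) | a <- enum 'I_7].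

Definition tup1 (a : 'I_7) : tup 'I_7 1 := [ffun _ => a].

From mathcomp Require Import all_boot fingroup perm zify.
Set Implicit Arguments. Unset Strict Implicit. Unset Printing Implicit Defensive.

(* Every relation of <H>_2 is definable by a quantifier-free conjunction of
   equalities, R- and Q-atoms and constants. Indeed a parity quantifier over
   such a conjunction either meets an equation y = t, and then amounts to
   substituting t for y, or constrains y only through its R- and Q-classes;
   since the intersection of an R-class (or H) with a Q-class (or H) has odd
   size exactly when it contains a3, it then amounts to substituting a3.
   Conjunctions of equivalence atoms are rectangular, hence strong
   2-rectangularity. The constants C_a rule out nontrivial automorphisms, and
   R o_2 Q differs from Q o_2 R at (a1, a6) because the R-class of a1 meets the
   Q-class of a6 in {a3}, while the Q-class of a1 meets the R-class of a6 in
   {a4, a5}. *)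

Inductive term (T : Type) := TVar of nat | TConst of T.
Arguments TVar {T}.

Inductive qatom (I T : Type) :=
  QEq of term T & term T | QKer of I & term T & term T | QFalse.
Arguments QEq {I T}. Arguments QKer {I T}. Arguments QFalse {I T}.

Section ParityQuantifierElimination.

Variables (T : finType) (I : Type) (U : eqType) (h : I -> T -> U) (c : T).

Definition tval (env : nat -> T) (t : term T) : T :=
  match t with TVar i => env i | TConst a => a end.

Definition qatom_sat (env : nat -> T) (a : qatom I T) : bool :=
  match a with
  | QEq s t => tval env s == tval env t
  | QKer i s t => h i (tval env s) == h i (tval env t)
  | QFalse => false
  end.

Definition qsat env (L : seq (qatom I T)) := all (qatom_sat env) L.

Lemma eq_qsat env env' L : env =1 env' -> qsat env L = qsat env' L.
Proof.
move=> E; have Et t : tval env t = tval env' t by case: t => //= i; rewrite E.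
by elim: L => //= a L ->; case: a => [s t|i s t|] /=; rewrite ?Et.
Qed.

Definition setv (env : nat -> T) y v := fun i => if i == y then v else env i.

Definition is_var y (t : term T) := if t is TVar i then i == y else false.

Lemma tval_setv env y v t :
  tval (setv env y v) t = if is_var y t then v else tval env t.
Proof. by case: t. Qed.

Definition subst_term y u t : term T := if is_var y t then u else t.

Definition subst_qatom y u (a : qatom I T) :=
  match a with
  | QEq s t => QEq (subst_term y u s) (subst_term y u t)
  | QKer i s t => QKer i (subst_term y u s) (subst_term y u t)
  | QFalse => QFalse
  end.

Lemma qsat_setv_subst env y u L :
  qsat (setv env y (tval env u)) L = qsat env (map (subst_qatom y u) L).
Proof.
have Et t : tval (setv env y (tval env u)) t = tval env (subst_term y u t).
  by rewrite tval_setv /subst_term; case: (is_var y t).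
by elim: L => //= a L ->; case: a => [s t|i s t|] /=; rewrite ?Et.
Qed.

Definition binds y (a : qatom I T) :=
  if a is QEq s t then is_var y s (+) is_var y t else false.

Definition bound_term y (a : qatom I T) :=
  if a is QEq s t then (if is_var y s then t else s) else TVar y.

Lemma binds_forced y a env v : binds y a ->
  qatom_sat (setv env y v) a -> v = tval env (bound_term y a).
Proof.
case: a => // s t /=; rewrite !tval_setv.
by case: (is_var y s); case: (is_var y t) => //= _ /eqP.
Qed.

Definition solution y L := bound_term y (nth QFalse L (find (binds y) L)).

Lemma solution_forced y L env v : has (binds y) L ->
  qsat (setv env y v) L -> v = tval env (solution y L).
Proof.
move=> hb /(all_nthP QFalse)/(_ _ (etrans (esym (has_find _ _)) hb)).
exact/binds_forced/nth_find.
Qed.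

Definition in_cell (cs : seq (I * U)) (v : T) := all (fun p => h p.1 v == p.2) cs.

Lemma in_cell_cat cs cs' v : in_cell (cs ++ cs') v = in_cell cs v && in_cell cs' v.
Proof. exact: all_cat. Qed.

Lemma qatom_cell y a env : ~~ binds y a ->
  exists b cs, forall v, qatom_sat (setv env y v) a = b && in_cell cs v.
Proof.
case: a => [s t|i s t|] /=; last by exists false, [::].
- case ys: (is_var y s); case yt: (is_var y t) => //= _.
    by exists true, [::] => v; rewrite !tval_setv ys yt eqxx.
  by exists (tval env s == tval env t), [::] => v; rewrite !tval_setv ys yt andbT.
- case ys: (is_var y s); case yt: (is_var y t).
  + by exists true, [::] => v; rewrite !tval_setv ys yt eqxx.
  + exists true, [:: (i, h i (tval env t))] => v.
    by rewrite !tval_setv ys yt /in_cell /= andbT.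
  + exists true, [:: (i, h i (tval env s))] => v.
    by rewrite !tval_setv ys yt /in_cell /= andbT eq_sym.
  + exists (h i (tval env s) == h i (tval env t)), [::] => v.
    by rewrite !tval_setv ys yt andbT.
Qed.

Lemma qsat_cell y L env : ~~ has (binds y) L ->
  exists b cs, forall v, qsat (setv env y v) L = b && in_cell cs v.
Proof.
elim: L => [|a L IH] /=; first by exists true, [::].
rewrite negb_or => /andP[/(qatom_cell env) [b0 [cs0 E0]] /IH [b [cs E]]].
exists (b0 && b), (cs0 ++ cs) => v.
by rewrite E0 E in_cell_cat andbACA.
Qed.

Hypothesis odd_cells : forall cs, odd #|[pred v | in_cell cs v]| = in_cell cs c.

Lemma odd_card_setv y L :
  exists L', forall env, odd #|[pred v | qsat (setv env y v) L]| = qsat env L'.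
Proof.
have [bound | unbound] := boolP (has (binds y) L).
  exists (map (subst_qatom y (solution y L)) L) => env; rewrite -qsat_setv_subst.
  set t := tval env _; have forced v := @solution_forced y L env v bound.
  case Lt: (qsat (setv env y t) L).
    rewrite (eq_card (B := pred1 t)) ?card1 // => v; rewrite !inE.
    by apply/idP/eqP => [/forced | ->].
  by rewrite eq_card0 // => v; rewrite !inE; apply/negP => /[dup] /forced ->; rewrite Lt.
(* Otherwise, by [odd_cells], the parity quantifier amounts to taking y = c. *)
exists (map (subst_qatom y (TConst c)) L) => env; rewrite -qsat_setv_subst /=.
have [b [cs E]] := qsat_cell env unbound.
rewrite (eq_card (B := [pred v | b && in_cell cs v])) => [|v]; last by rewrite !inE E.
by rewrite E; case: (b) => /=; rewrite ?odd_cells ?eq_card0.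
Qed.

Definition tcons k (v : T) (b : tup T k) : tup T k.+1 :=
  [ffun i => if unlift ord0 i is Some j then b j else v].

Lemma upd_tcons env off k v (b : tup T k) :
  upd env off (tcons v b) =1 upd (setv env off v) off.+1 b.
Proof.
move=> i; rewrite /upd /setv.
case: (ltngtP off i) => [lt_off_i|//|<-]; last first.
  rewrite subnn; case: insubP => [j _ j0|] //=; rewrite ffunE.
  by rewrite (_ : j = ord0) ?unlift_none //; apply: val_inj.
case: insubP => [j lt_j ej|] /=; case: insubP => [j' lt_j' ej'|] //=; try lia.
rewrite ffunE; case: (unliftP ord0 j) => [j2 ej2|ej2]; last by move: ej; rewrite ej2 /=; lia.
by congr (b _); apply: val_inj; rewrite ej'; move: ej; rewrite ej2 /= /bump /=; lia.
Qed.

Lemma card_tcons k (P : pred (tup T k.+1)) :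
  #|P| = \sum_v #|[pred b | P (tcons v b)]|.
Proof.
have tcons_bij : bijective (fun p : T * tup T k => tcons p.1 p.2).
  exists (fun b : tup T k.+1 => (b ord0, [ffun j => b (lift ord0 j)])).
    move=> [v b] /=; rewrite ffunE unlift_none; congr pair.
    by apply/ffunP => j; rewrite !ffunE liftK.
  move=> b; apply/ffunP => i; rewrite ffunE.
  by case: (unliftP ord0 i) => [j ->|->]; rewrite ?ffunE.
rewrite -sum1_card (reindex _ (onW_bij _ tcons_bij)) /=.
under [RHS]eq_bigr do rewrite -sum1_card.
by rewrite pair_big_dep; apply: eq_bigl => p; rewrite !inE.
Qed.

Lemma odd_sum (J : finType) (F : J -> nat) :
  odd (\sum_j F j) = odd #|[pred j | odd (F j)]|.
Proof.
rewrite -sum1_card [in RHS]big_mkcond /=.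
apply: (big_rec2 (fun a b => odd a = odd b)) => //= j m n _ IH.
by rewrite !oddD IH !inE; case: (odd (F j)).
Qed.

Lemma odd_card_upd k off L : exists L', forall env,
  odd #|[pred b : tup T k | qsat (upd env off b) L]| = qsat env L'.
Proof.
elim: k off L => [|k IH] off L.
  exists L => env; have upd0 (b : tup T 0) : upd env off b =1 env.
    by move=> i; rewrite /upd; case: ifP => // _; case: insubP => [[]|].
  rewrite (eq_card (B := [pred b : tup T 0 | qsat env L])) => [|b]; last first.
    by rewrite !inE (eq_qsat _ (upd0 b)).
  case: (qsat env L); last by rewrite eq_card0.
  by rewrite (eq_card (B := {ffun 'I_0 -> T})) // card_ffun card_ord.
have [L1 E1] := IH off.+1 L; have [L2 E2] := odd_card_setv off L1.
exists L2 => env; rewrite card_tcons odd_sum -E2; congr odd.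
apply: eq_card => v; rewrite !inE -E1; congr odd; apply: eq_card => b.
by rewrite !inE (eq_qsat _ (upd_tcons env off v b)).
Qed.

Lemma sat_q_qf (H : rstruct T) bs off Phi :
  (forall a, exists L, forall env, atom_sat H env a = qsat env L) ->
  exists L, forall env, sat_q H bs off env Phi = qsat env L.
Proof.
move=> atom_qf; elim: bs off => [|k bs IH] off /=.
  elim: Phi => [|a Phi [L E]]; first by exists [::].
  by have [La Ea] := atom_qf a; exists (La ++ L) => env /=; rewrite Ea E /qsat all_cat.
have [L1 E1] := IH (off + k); have [L2 E2] := odd_card_upd k off L1.
exists L2 => env; rewrite -E2; congr odd; apply: eq_card => b.
by rewrite !inE E1.
Qed.

Lemma upd0_lt env k (b : tup T k) i (lt_ik : i < k) : upd env 0 b i = b (Ordinal lt_ik).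
Proof.
rewrite /upd subn0 /=; case: insubP => [j _ ej|]; last by rewrite /= lt_ik.
by congr (b _); apply: val_inj.
Qed.

Lemma upd0_ge env k (b : tup T k) i : k <= i -> upd env 0 b i = env i.
Proof.
by move=> le_ki; rewrite /upd subn0 /=; case: insubP => [j|] //=; rewrite ltnNge le_ki.
Qed.

Definition mixed (w x y z : T) := (w = z /\ x = y) \/ (w = y /\ x = z).

Lemma mixed_kernel (V : eqType) (f : T -> V) w1 x1 y1 z1 w2 x2 y2 z2 :
  mixed w1 x1 y1 z1 -> mixed w2 x2 y2 z2 ->
  f x1 == f x2 -> f y1 == f y2 -> f z1 == f z2 -> f w1 == f w2.
Proof.
by move=> [[-> ->]|[-> ->]] [[-> ->]|[-> ->]] /eqP e1 /eqP e2 /eqP e3; apply/eqP; congruence.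
Qed.

(* The point w of rectangularity agrees with z where x agrees with y, and with
   y where x agrees with z; kernels of maps cannot separate such a point. *)
Lemma qsat_rectangular n (S : {set tup T n}) L env0 :
  (forall a, (a \in S) = qsat (upd env0 0 a) L) -> rectangular S.
Proof.
move=> S_qf J _ _ x y z; rewrite !S_qf => Sx Sy Sz xy xz.
set w := [ffun i => _].
have mixed_terms t : mixed (tval (upd env0 0 w) t) (tval (upd env0 0 x) t)
                           (tval (upd env0 0 y) t) (tval (upd env0 0 z) t).
  case: t => [i|a] /=; last by left.
  have [lt_in|le_ni] := ltnP i n; last by left; rewrite !upd0_ge.
  rewrite !(upd0_lt _ _ lt_in) /w ffunE; case: ifP => iJ.
    by left; rewrite xy.
  by right; rewrite xz ?iJ.
elim: L Sx Sy Sz {S_qf} => //= a L IH /andP[ax Lx] /andP[ay Ly] /andP[az Lz].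
rewrite IH // andbT.
case: a ax ay az => //= [s t|i s t].
  exact: (mixed_kernel (f := id) (mixed_terms s) (mixed_terms t)).
exact: (mixed_kernel (f := h i) (mixed_terms s) (mixed_terms t)).
Qed.

Lemma definable2_rectangular (H : rstruct T) n (S : {set tup T n}) :
  (forall a, exists L, forall env, atom_sat H env a = qsat env L) ->
  definable2 H S -> rectangular S.
Proof.
move=> atom_qf [bs [Phi [_ S_def]]].
have [L E] := sat_q_qf bs n Phi atom_qf.
pose env0 : nat -> T := fun=> c.
by apply: (qsat_rectangular (env0 := env0) (L := L)) => a; rewrite (S_def env0) E.
Qed.

End ParityQuantifierElimination.

Definition kerset (T : finType) (V : eqType) (f : T -> V) : {set tup T 2} :=
  [set t : tup T 2 | f (t ord0) == f (t ord_max)].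

Section KernelRelations.

Variables (T : finType) (V : eqType) (f g : T -> V).

Lemma atom_sat_kerset (H : rstruct T) r env args :
  nthrel H r = Tagged (relS T) (kerset f) ->
  atom_sat H env (ARel r args) = if args is [:: i; j] then f (env i) == f (env j) else false.
Proof. by move=> /= ->; case: args => [|i [|j [|? ?]]] //=; rewrite inE !ffunE. Qed.

Lemma pairT_ord0 (a b : tup T 1) : pairT a b (ord0 : 'I_(1 + 1)) = a ord0.
Proof.
rewrite ffunE (_ : ord0 = lshift 1 (ord0 : 'I_1)); last exact: val_inj.
by rewrite -/(unsplit (inl _)) unsplitK.
Qed.

Lemma pairT_ord_max (a b : tup T 1) : pairT a b (ord_max : 'I_(1 + 1)) = b ord0.
Proof.
rewrite ffunE (_ : ord_max = rshift 1 (ord0 : 'I_1)); last exact: val_inj.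
by rewrite -/(unsplit (inr _)) unsplitK.
Qed.

Lemma pairT_kerset (a b : tup T 1) : (pairT a b \in kerset f) = (f (a ord0) == f (b ord0)).
Proof. by rewrite inE pairT_ord0 pairT_ord_max. Qed.

Lemma comp2_kerset_const (a b : T) :
  @comp2 T 1 (kerset f) (kerset g) [ffun=> a] [ffun=> b] =
  odd #|[pred v | (f a == f v) && (g v == g b)]|.
Proof.
have const_bij : bijective (fun v : T => [ffun=> v] : tup T 1).
  exists (fun c : tup T 1 => c ord0) => [v|c]; first by rewrite ffunE.
  by apply/ffunP => i; rewrite ffunE ord1.
rewrite /comp2 -!sum1_card (reindex _ (onW_bij _ const_bij)) /=.
by congr odd; apply: eq_bigl => v; rewrite !inE !pairT_ord0 !pairT_ord_max !ffunE.
Qed.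

Lemma definable2_setT (H : rstruct T) n : definable2 H [set: tup T n].
Proof. by exists [::], [::]; split=> // env a; rewrite inE. Qed.

Lemma kerset_cong2 (H : rstruct T) r :
  r < size H -> nthrel H r = Tagged (relS T) (kerset f) -> cong2 H [set: tup T 1] (kerset f).
Proof.
move=> lt_r_H Hr; split.
- exists [::], [:: ARel r [:: 0; 1]]; split; first by rewrite /= Hr lt_r_H.
  move=> env a /=; rewrite andbT Hr /= !inE !ffunE /=.
  rewrite (upd0_lt _ _ (isT : 0 < 1 + 1)) (upd0_lt _ _ (isT : 1 < 1 + 1)).
  by congr (f (a _) == f (a _)); apply: val_inj.
- by move=> a b; rewrite !inE.
- by move=> a _; rewrite pairT_kerset.
- by move=> a b; rewrite !pairT_kerset eq_sym.
- by move=> a b c; rewrite !pairT_kerset => /eqP -> /eqP ->.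
Qed.

End KernelRelations.

Lemma el_val k : k < 7 -> val (el k) = k.
Proof. by move=> lt_k7; rewrite /el /= inordK. Qed.

Definition inR (x : 'I_7) : bool := val x < 3.

Definition block (b : bool) : 'I_7 -> bool := if b then inR else inQ1.

(* The cells R-class /\ Q-class are {a1,a2}, {a3}, {a4,a5}, {a6,a7}, the
   R-classes have sizes 3, 4, the Q-classes 4, 3, and H has 7 elements. *)
Lemma odd_card_blocks (P : {pred 'I_7}) (fR fQ : bool -> bool) :
  (forall v, (v \in P) = fR (inR v) && fQ (inQ1 v)) -> odd #|P| = fR true && fQ false.
Proof.
move=> PE; rewrite -sum1_card big_mkcond /= !big_ord_recl big_ord0 /= !PE /inR /inQ1 /=.
by case: (fR true); case: (fR false); case: (fQ true); case: (fQ false).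
Qed.

Lemma odd_cells_Hs cs : odd #|[pred v | in_cell block cs v]| = in_cell block cs (el 2).
Proof.
pose fR x := all (fun p : bool * bool => p.1 ==> (x == p.2)) cs.
pose fQ x := all (fun p : bool * bool => ~~ p.1 ==> (x == p.2)) cs.
have cellE v : in_cell block cs v = fR (inR v) && fQ (inQ1 v).
  by rewrite /fR /fQ; clear; elim: cs => //= -[[] u] cs -> /=; [exact: andbA | exact: andbCA].
by rewrite (odd_card_blocks (fR := fR) (fQ := fQ)) ?cellE /inR /inQ1 ?el_val.
Qed.

Lemma nthrel_Hs_const (a : 'I_7) : nthrel Hs a.+2 = Tagged (relS 'I_7) (relC a).
Proof.
rewrite /nthrel /= (nth_map ord0) ?size_enum_ord //.
by rewrite (_ : nth ord0 _ a = a) //; apply: val_inj; rewrite /= nth_enum_ord.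
Qed.

Lemma nthrel_Hs_beyond r : 7 <= r ->
  nthrel Hs r.+2 = Tagged (relS 'I_7) (set0 : {set tup 'I_7 0}).
Proof. by move=> le_7r; rewrite /nthrel /= nth_default // size_map size_enum_ord. Qed.

Lemma atom_sat_relC r (a : 'I_7) env args :
  nthrel Hs r = Tagged (relS 'I_7) (relC a) ->
  atom_sat Hs env (ARel r args) = if args is [:: i] then env i == a else false.
Proof. by move=> /= ->; case: args => [|i [|? ?]] //=; rewrite inE ffunE. Qed.

Lemma atom_qf_Hs a : exists L, forall env, atom_sat Hs env a = qsat block env L.
Proof.
case: a => [r args|i j]; last by exists [:: QEq (TVar i) (TVar j)] => env /=; rewrite andbT.
have kernel_atom b r' : nthrel Hs r' = Tagged (relS 'I_7) (kerset (block b)) ->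
    exists L, forall env, atom_sat Hs env (ARel r' args) = qsat block env L.
  move=> Hr'; case: args => [|i [|j [|? ?]]];
    try by exists [:: QFalse] => env; rewrite (atom_sat_kerset _ _ Hr').
  by exists [:: QKer b (TVar i) (TVar j)] => env; rewrite (atom_sat_kerset _ _ Hr') /= andbT.
case: r => [|[|r]]; [exact: (kernel_atom true) | exact: (kernel_atom false) |].
have [lt_r7|le_7r] := ltnP r 7; last first.
  by exists [:: QFalse] => env; rewrite /atom_sat nthrel_Hs_beyond //= inE andbF.
have Hr := nthrel_Hs_const (Ordinal lt_r7); clear kernel_atom.
case: args => [|i [|? ?]]; try by exists [:: QFalse] => env; rewrite (atom_sat_relC _ _ Hr).
by exists [:: QEq (TVar i) (TConst (Ordinal lt_r7))] => env; rewrite (atom_sat_relC _ _ Hr) /= andbT.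
Qed.

Lemma rigid_Hs : rigid2 Hs.
Proof.
case=> s [s_aut s_order]; suff s1 : s = 1%g by rewrite s1 order1 in s_order.
apply/permP => a; rewrite perm1.
have lt_aHs : a.+2 < size Hs by rewrite /Hs /= size_map size_enum_ord ltnS ltnS.
move: (s_aut _ lt_aHs); rewrite nthrel_Hs_const => /(_ (tup1 a)).
by rewrite !inE !ffunE eqxx => /esym/eqP.
Qed.

Lemma comp2_RQ : @comp2 'I_7 1 relR relQ (tup1 (el 0)) (tup1 (el 5)).
Proof.
rewrite (comp2_kerset_const inR inQ1).
rewrite (odd_card_blocks (fR := eq_op (inR (el 0))) (fQ := eq_op^~ (inQ1 (el 5)))) //.
by rewrite /inR /inQ1 !el_val.
Qed.

Lemma comp2_QR : ~~ @comp2 'I_7 1 relQ relR (tup1 (el 0)) (tup1 (el 5)).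
Proof.
rewrite (comp2_kerset_const inQ1 inR).
rewrite (odd_card_blocks (fR := eq_op^~ (inR (el 5))) (fQ := eq_op (inQ1 (el 0)))).
  by rewrite /inR /inQ1 !el_val.
by move=> v; rewrite !inE andbC.
Qed.

Lemma not_cong_permutable2_Hs : ~ cong_permutable2 Hs.
Proof.
move=> perm2; move: comp2_QR.
rewrite -(perm2 1 setT relR relQ (definable2_setT _ _) _ _ _ _) ?comp2_RQ //.
  exact: (kerset_cong2 (f := inR) (r := 0)).
exact: (kerset_cong2 (f := inQ1) (r := 1)).
Qed.

Theorem mainTheorem15 :
  rigid2 Hs /\ strongly_rect2 Hs /\ ~ cong_permutable2 Hs /\
  (@comp2 'I_7 1 relR relQ (tup1 (el 0)) (tup1 (el 5)) /\
   ~~ @comp2 'I_7 1 relQ relR (tup1 (el 0)) (tup1 (el 5))).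
Proof.
split; first exact: rigid_Hs.
split; first by move=> n S _; exact: (definable2_rectangular odd_cells_Hs atom_qf_Hs).
by split; [exact: not_cong_permutable2_Hs | split; [exact: comp2_RQ | exact: comp2_QR]].
Qed.
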